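(* Assume condition (G) on the groups and (A2), and let $\alpha$ and $(\beta_n)$ be such that $\beta_n\to0$ and $\lim_{n\to\infty}mpBFDR_{\beta_n}=\alpha$ with $\alpha$ in the feasible range $\left(\frac{1}{\sum_i d^t_i+1},\frac{m-m_1}{\sum_i d^t_i+m-m_1}\right)$ (as provided by the $\alpha$-control theorem). Let $\tilde H_{\min}=\min_{i:d^t_i=0}J(H_{1i})$. Then for the non-marginal procedure with penalties $\beta_n$, almost surely, $$\limsup_{n\to\infty}\frac1n\log FNR_{\mathbf X_n}\le-\tilde H_{\min}.$$
   Context: Data and models: $\mathbf X_n=(X_1,\ldots,X_n)$ are the first $n$ coordinates of a process with true distribution $P$; $p(\mathbf X_n)$ is the true joint density and $f_{\boldsymbol\theta}(\mathbf X_n)$ the postulated density for $\boldsymbol\theta=(\theta_1,\ldots,\theta_M)\in\boldsymbol\Theta=\Theta_1\times\cdots\times\Theta_M$ ($M\le\infty$); $P$ need not belong to the postulated family. $\pi$ is a prior on $\boldsymbol\Theta$, $\pi(\cdot\mid\mathbf X_n)$ the posterior; $E_{\mathbf X_n},P_{\mathbf X_n}$ denote expectation/probability over the data under $P$. For finitely many indices $i=1,\ldots,m$ ($1<m\le M$) one tests $H_{0i}:\theta_i\in\Theta_{0i}$ vs $H_{1i}:\theta_i\in\Theta_{1i}$, where $\Theta_{0i}\cap\Theta_{1i}=\emptyset$, $\Theta_{0i}\cup\Theta_{1i}=\Theta_i$. A decision configuration is $\mathbf d=(d_1,\ldots,d_m)\in\mathbb D=\{0,1\}^m$ ($d_i=1$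 means $H_{0i}$ is rejected); $\Theta_{d_jj}$ means $\Theta_{0j}$ if $d_j=0$ and $\Theta_{1j}$ if $d_j=1$. $\mathbf 0,\mathbf 1$ denote the all-zero and all-one configurations. KL quantities: $h(\boldsymbol\theta)=\lim_{n}n^{-1}E_P[\log(p(\mathbf X_n)/f_{\boldsymbol\theta}(\mathbf X_n))]$; for measurable $A$, $h(A)=\pi\text{-}\operatorname{ess\,inf}_{\boldsymbol\theta\in A}h(\boldsymbol\theta)$, $J(\boldsymbol\theta)=h(\boldsymbol\theta)-h(\boldsymbol\Theta)$, $J(A)=\pi\text{-}\operatorname{ess\,inf}_{\boldsymbol\theta\in A}J(\boldsymbol\theta)$. Let $\boldsymbol\Theta(\mathbf d)=\prod_{i=1}^m\Theta_{d_ii}\times\prod_{i>m}\Theta_i$; the true configuration $\mathbf d^t$ is the unique $\mathbf d$ with $J(\boldsymbol\Theta(\mathbf d))=J(\boldsymbol\Theta)$. Groups and sets: for each $i$ a set $G_i\subseteq\{1,\ldots,m\}$ with $i\in G_i$ is fixed. Let $\Psi_{i\mathbf d}=\{\boldsymbol\theta:\theta_i\in\Theta_{1i},\ \theta_j\in\Theta_{d_jj}\ \forall j\in G_i\setminus\{i\}\}$ and $\Upsilon_{ki}=\{\boldsymbol\theta:\theta_i\in\Theta_{ki}\}$, $k=0,1$. Write $J(\boldsymbol\Theta_{i\mathbf d})=J(\Psi_{i\mathbf d})$, $J(\boldsymbol\Theta^c_{i\mathbf d})=J(\boldsymbol\Theta\setminus\Psi_{i\mathbf d})$, $J(H_{ki})=J(\Upsilon_{ki})$.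 $\mathbb D_i=\{\mathbf d: d_j=d^t_j\ \forall j\in G_i\}$. Posterior probabilities: $w_{in}(\mathbf d)=\pi(\Psi_{i\mathbf d}\mid\mathbf X_n)$, $v_{in}=\pi(\Upsilon_{1i}\mid\mathbf X_n)$. Standing assumption (posterior exponential concentration, i.e. the conclusion of Shalizi's (2009) theorem under his conditions (S1)–(S7), assumed throughout): for all $i,\mathbf d,k$ the sets $A=\Psi_{i\mathbf d}$, $\boldsymbol\Theta\setminus\Psi_{i\mathbf d}$, $\Upsilon_{ki}$ have $\pi(A)>0$ and satisfy $\lim_{n\to\infty}n^{-1}\log\pi(A\mid\mathbf X_n)=-J(A)$ $P$-a.s.; moreover $J(\boldsymbol\Theta_{i\mathbf d})>0$ for $\mathbf d\notin\mathbb D_i$, $J(\boldsymbol\Theta_{i\mathbf d^t})>0$ when $d^t_i=0$, $J(\boldsymbol\Theta^c_{i\mathbf d^t})>0$ when $d^t_i=1$, $J(H_{1i})>0$ when $d^t_i=0$, $J(H_{0i})>0$ when $d^t_i=1$. Procedures: given $\beta_n\in[0,1)$, the non-marginal procedure selects $\hat{\mathbf d}=\arg\max_{\mathbf d\in\mathbb D}\sum_{i=1}^m d_i(w_{in}(\mathbf d)-\beta_n)$ (ties broken by any fixed rule) and sets $\delta_{NM}(\mathbf d\mid\mathbf X_n)=1$ if $\mathbf d=\hat{\mathbf d}$ and $0$ otherwise. $mpBFDR_\beta$ denotes the $mpBFDR$ of this procedure with penalty $\beta$. Error measures (with $\delta=\delta_{NM}$): $mFDR_{\mathbf X_n}=\sum_{\mathbf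 d}\frac{\sum_i d_i(1-w_{in}(\mathbf d))}{(\sum_i d_i)\vee1}\delta(\mathbf d\mid\mathbf X_n)$, $FNR_{\mathbf X_n}=\sum_{\mathbf d}\frac{\sum_i(1-d_i)v_{in}}{(\sum_i(1-d_i))\vee1}\delta(\mathbf d\mid\mathbf X_n)$, $mpBFDR=E_{\mathbf X_n}[mFDR_{\mathbf X_n}\mid\delta(\mathbf 0\mid\mathbf X_n)=0]$. Known fact used (Chandra and Bhattacharya 2017): for each $n$, $\beta\mapsto mpBFDR_\beta$ is continuous and non-increasing on $[0,1]$. Condition (A2): $\mathbf d^t\ne\mathbf 0$ and $\mathbf d^t\ne\mathbf 1$. Condition (G): after relabelling, there is $m_1<m$ such that each of $G_1,\ldots,G_{m_1}$ contains at least one index $j$ with $d^t_j=1$, every index $j\in G_{m_1+1}\cup\cdots\cup G_m$ has $d^t_j=0$, and $(G_1\cup\cdots\cup G_{m_1})\cap(G_{m_1+1}\cup\cdots\cup G_m)=\emptyset$. *)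

From HB Require Import structures.
From mathcomp Require Import all_boot all_order all_algebra.
From mathcomp Require Import all_classical all_reals all_analysis.
Set Implicit Arguments. Unset Strict Implicit. Unset Printing Implicit Defensive.
Import Order.TTheory GRing.Theory Num.Theory.
Import numFieldNormedType.Exports.
Local Open Scope classical_set_scope.
Local Open Scope ring_scope.

Notation config m := {ffun 'I_m -> bool}.

Section NonMarginal.
Context {R : realType} {dO dT : measure_display}
  {Omega : measurableType dO} {Theta : measurableType dT}.

Definition logE (x : R) : \bar R := if x == 0 then -oo%E else (ln x)%:E.

Definition ess_inf_on (pi : {measure set Theta -> \bar R}) (A : set Theta)
  (f : Theta -> \bar R) : \bar R :=
  ereal_sup [set c : \bar R | pi (A `&` [set x | (f x < c)%E]) = 0%E].

Variables (P : probability Omega R) (pi : probability Theta R) (m : nat).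
(* lr n theta omega = log (f_theta(X_n(omega)) / p(X_n(omega))) *)
Variable lr : nat -> Theta -> Omega -> R.
(* Ups1 i = Upsilon_{1i} = {theta | theta_i \in Theta_{1i}} *)
Variable Ups1 : 'I_m -> set Theta.
Variable G : 'I_m -> {set 'I_m}.

Definition Ups (k : bool) (i : 'I_m) : set Theta :=
  if k then Ups1 i else ~` Ups1 i.

Definition Psi (i : 'I_m) (d : config m) : set Theta :=
  Ups1 i `&` \bigcap_(j in [set j | (j \in G i) && (j != i)]) Ups (d j) j.

Definition ThetaD (d : config m) : set Theta :=
  \bigcap_(j in [set: 'I_m]) Ups (d j) j.

Definition hseq (n : nat) (th : Theta) : R :=
  n%:R^-1 * fine (\int[P]_w (- lr n th w)%:E)%E.
Definition h (th : Theta) : R := limn (fun n => hseq n th).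
Definition hTheta : \bar R := ess_inf_on pi setT (fun th => (h th)%:E).
Definition Jfun (th : Theta) : \bar R := ((h th)%:E - hTheta)%E.
Definition JA (A : set Theta) : \bar R := ess_inf_on pi A Jfun.

Definition postNum (n : nat) (w : Omega) (A : set Theta) : \bar R :=
  (\int[pi]_(th in A) (expR (lr n th w))%:E)%E.
Definition post (n : nat) (w : Omega) (A : set Theta) : R :=
  fine (postNum n w A) / fine (postNum n w setT).

Definition w_in (i : 'I_m) (d : config m) (n : nat) (w : Omega) : R :=
  post n w (Psi i d).
Definition v_in (i : 'I_m) (n : nat) (w : Omega) : R := post n w (Ups1 i).

Definition Dset (dt : config m) (i : 'I_m) : set (config m) :=
  [set d | forall j, j \in G i -> d j = dt j].

Definition score (beta : R) (n : nat) (w : Omega) (d : config m) : R :=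
  \sum_(i < m) (d i)%:R * (w_in i d n w - beta).

(* a fixed tie-breaking rule: maps the vector of scores to a maximiser *)
Definition argmax_rule (rule : {ffun config m -> R} -> config m) : Prop :=
  forall (s : {ffun config m -> R}) (d : config m), s d <= s (rule s).

Definition dhat (rule : {ffun config m -> R} -> config m) (beta : R)
  (n : nat) (w : Omega) : config m :=
  rule [ffun d => score beta n w d].

Definition deltaNM rule beta n w (d : config m) : R :=
  (d == dhat rule beta n w)%:R.

Definition mFDR rule beta n w : R :=
  \sum_(d : config m)
    ((\sum_(i < m) (d i)%:R * (1 - w_in i d n w))
       / (maxn (\sum_(i < m) nat_of_bool (d i)) 1)%:R)
    * deltaNM rule beta n w d.

Definition FNR rule beta n w : R :=
  \sum_(d : config m)
    ((\sum_(i < m) (~~ d i)%:R * v_in i n w)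
       / (maxn (\sum_(i < m) nat_of_bool (~~ d i)) 1)%:R)
    * deltaNM rule beta n w d.

Definition config0 : config m := [ffun => false].
Definition config1 : config m := [ffun => true].

Definition mpBFDR rule beta n : R :=
  let E0 := [set w | deltaNM rule beta n w config0 = 0] in
  fine (\int[P]_(w in E0) (mFDR rule beta n w)%:E)%E / fine (P E0).

Definition true_config (dt : config m) : Prop :=
  JA (ThetaD dt) = JA setT /\ forall d, JA (ThetaD d) = JA setT -> d = dt.

(* standing assumption: posterior exponential concentration *)
Definition concentrates (A : set Theta) : Prop :=
  (0 < pi A)%E /\
  {ae P, forall w, (fun n => (n%:R^-1)%:E * logE (post n w A))%E @ \oo
                     --> (- JA A)%E}.

Definition standing (dt : config m) : Prop :=
  (forall i d, concentrates (Psi i d) /\ concentrates (~` Psi i d)) /\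
  (forall i k, concentrates (Ups k i)) /\
  (forall i d, ~ Dset dt i d -> (0 < JA (Psi i d))%E) /\
  (forall i, ~~ dt i -> (0 < JA (Psi i dt))%E) /\
  (forall i, dt i -> (0 < JA (~` Psi i dt))%E) /\
  (forall i, ~~ dt i -> (0 < JA (Ups1 i))%E) /\
  (forall i, dt i -> (0 < JA (~` Ups1 i))%E).

End NonMarginal.

(* Condition (G), without relabelling: S plays the role of {1,...,m1},
   so m1 = #|S| and m1 < m means some index lies outside S *)
Definition condG (m : nat) (G : 'I_m -> {set 'I_m}) (dt : config m)
  (S : {set 'I_m}) : Prop :=
  (exists i, i \notin S) /\
  (forall i, i \in S -> exists2 j, j \in G i & dt j) /\
  (forall i, i \notin S -> forall j, j \in G i -> ~~ dt j) /\
  (forall j, ~ ((exists2 i, i \in S & j \in G i) /\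
               (exists2 i, i \notin S & j \in G i))).

(* Almost surely every posterior probability pi(A | X_n) decays like exp(-n J(A)).
   Hence, once beta_n is small, the posterior mass of every configuration that
   disagrees with d^t on some group G_i is negligible, and any configuration
   that fails to reject a true alternative j scores strictly less than d^t: it
   loses w_{jn}(d^t) ~ 1 while gaining at most m (eps + beta_n). So eventually
   the selected configuration rejects every true alternative, the false
   nondiscoveries are among the true nulls, and
   FNR <= sum_{d^t_i = 0} pi(Theta_{1i} | X_n) <= m exp(-n c) for every c < H_min. *)

From HB Require Import structures.
From mathcomp Require Import all_boot all_order all_algebra.
From mathcomp Require Import all_classical all_reals all_analysis.
From mathcomp Require Import lra.
Set Implicit Arguments. Unset Strict Implicit. Unset Printing Implicit Defensive.
Import Order.TTheory GRing.Theory Num.Theory.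
Import numFieldNormedType.Exports measurable_realfun.
Local Open Scope classical_set_scope.
Local Open Scope ring_scope.

Section ExtendedRealLimits.
Context {R : realType}.
Local Open Scope ereal_scope.

Lemma cvg_lte_near {T} {F : set_system T} {u : T -> \bar R} {y x : \bar R} :
  u @ F --> y -> y < x -> \forall t \near F, u t < x.
Proof.
move=> uy yx; have : nbhs y [set z | z < x].
  by apply: open_nbhs_nbhs; split => //; exact: open_ereal_lt_ereal.
by move/uy.
Qed.

Lemma limn_esup_le_near (u : (\bar R)^nat) l :
  (\forall n \near \oo, u n <= l) -> limn_esup u <= l.
Proof.
move=> Ful; apply: le_trans (ereal_inf_lbound _) _.
  by exists [set t | u t <= l].
by apply: ge_ereal_sup => _ [t ult <-].
Qed.

Lemma EFin_lt_exists_between (J : \bar R) (c : R) :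
  c%:E < J -> exists2 c' : R, (c < c')%R & c'%:E < J.
Proof.
case: J => [r||] //; last by exists (c + 1)%R; [lra | exact: ltey].
by rewrite lte_fin => cr; exists ((c + r) / 2)%R; rewrite ?lte_fin; lra.
Qed.

Lemma lee_oppr_of_lt (x H : \bar R) :
  (forall c : R, c%:E < H -> x <= (- c)%:E) -> x <= - H.
Proof.
case: H => [r||] xc; last by rewrite leey.
- apply/lee_addgt0Pr => e e0.
  rewrite -EFinN -EFinD addrC -opprB; apply: xc; rewrite lte_fin; lra.
- case: x xc => [s||] xc //; last by have := xc 0%R (ltey _).
  by have := xc (- s + 1)%R (ltey _); rewrite lee_fin => /= h; exfalso; lra.
Qed.

End ExtendedRealLimits.

Lemma sum_indicator_le_near {R : realType} m (a : 'I_m -> bool)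
    (p : 'I_m -> nat -> R) (b : nat -> R) :
  (forall n, 0 <= b n) -> (forall i, a i -> \forall n \near \oo, p i n <= b n) ->
  \forall n \near \oo, \sum_(i < m) (a i)%:R * p i n <= m%:R * b n.
Proof.
move=> b0 pb; have : \forall n \near \oo, forall i, a i -> p i n <= b n.
  apply: filter_forall => i; case: (boolP (a i)) => ai.
    by apply: filterS (pb i ai) => n + _.
  by apply: nearW => n /negP.
apply: filterS => n pbn; rewrite -[X in _ <= X%:R * _]card_ord mulr_natl -sumr_const.
by apply: ler_sum => i _; case: (boolP (a i)) => ai /=; rewrite ?mul1r ?pbn ?mul0r.
Qed.

Section LogRate.
Context {R : realType}.

Definition lograte (p : nat -> R) (n : nat) : \bar R :=
  ((n%:R^-1)%:E * logE (p n))%E.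

Lemma le_expR_of_lograte_lt (p : nat -> R) c n : (0 < n)%N -> 0 <= p n ->
  (lograte p n < (- c)%:E)%E -> p n <= expR (- c * n%:R).
Proof.
move=> n0 p0; rewrite /lograte /logE; case: eqP => [->|pn0]; first by rewrite expR_ge0.
have {}p0 : 0 < p n by rewrite lt_neqAle eq_sym p0 andbT; apply/eqP.
rewrite -EFinM lte_fin -(ltr_pM2l (ltr0Sn _ n.-1)) prednK // mulrA mulfV ?pnatr_eq0 -?lt0n //.
by rewrite mul1r mulrC -ltr_expR lnK ?posrE // => /ltW.
Qed.

Lemma lograte_le_of_le_expR (p : nat -> R) K c c' n : 0 < K -> 0 <= p n ->
  (0 < n)%N -> ln K / n%:R <= c' - c -> p n <= K * expR (- c' * n%:R) ->
  (lograte p n <= (- c)%:E)%E.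
Proof.
move=> K0 p0 n0 nK pK; have n0' : 0 < n%:R :> R by rewrite ltr0n.
rewrite /lograte /logE; case: eqP => [_|pn0].
  by rewrite mulrNy gtr0_sg ?invr_gt0 // mul1e leNye.
have {}p0 : 0 < p n by rewrite lt_neqAle eq_sym p0 andbT; apply/eqP.
rewrite -EFinM lee_fin.
have : ln (p n) <= ln K + - c' * n%:R.
  by rewrite -[X in _ + X]expRK -lnM ?posrE ?expR_gt0 // ler_ln ?posrE ?mulr_gt0 ?expR_gt0.
have n1 : 0 <= n%:R^-1 :> R by rewrite invr_ge0 ltW.
move/(ler_wpM2l n1)/le_trans; apply.
rewrite mulrDr mulrA (mulrC _ (- c')) -mulrA mulVf ?gt_eqF // mulr1 mulrC; lra.
Qed.

Lemma lograte_le_near (p : nat -> R) K c c' : 0 < K -> c < c' ->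
  (forall n, 0 <= p n) -> (\forall n \near \oo, p n <= K * expR (- c' * n%:R)) ->
  \forall n \near \oo, (lograte p n <= (- c)%:E)%E.
Proof.
move=> K0 cc' p0 pK; near=> n; apply: (lograte_le_of_le_expR (K := K) (c' := c')) => //.
- by rewrite -(ltr0n R); near: n; exact: nbhs_infty_gtr.
- have n0 : (0 < n)%N by rewrite -(ltr0n R); near: n; exact: nbhs_infty_gtr.
  have : ln K / (c' - c) <= n%:R by near: n; exact: nbhs_infty_ger.
  by rewrite !ler_pdivrMr ?ltr0n ?subr_gt0 // mulrC.
- by near: n.
Unshelve. all: by end_near.
Qed.

Lemma lograte_cvg_le_expR (p : nat -> R) J c : (forall n, 0 <= p n) ->
  lograte p @ \oo --> (- J)%E -> (c%:E < J)%E ->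
  \forall n \near \oo, p n <= expR (- c * n%:R).
Proof.
move=> p0 pJ cJ; have Jc : (- J < (- c)%:E)%E by rewrite EFinN lteN2.
apply: filterS2 (cvg_lte_near pJ Jc) (nbhs_infty_gtr (0 : R)) => n pn n0.
by apply: le_expR_of_lograte_lt => //; rewrite -(ltr0n R).
Qed.

Lemma lograte_cvg0 (p : nat -> R) J : (forall n, 0 <= p n) ->
  lograte p @ \oo --> (- J)%E -> (0 < J)%E -> p @ \oo --> 0.
Proof.
move=> p0 pJ J0; have [c c0 cJ] := @EFin_lt_exists_between R J 0 J0.
apply/cvgrPdist_lt => eps eps0.
apply: filterS2 (lograte_cvg_le_expR p0 pJ cJ) (nbhs_infty_gtr (- ln eps / c)).
move=> n pn nb; rewrite sub0r normrN ger0_norm //; apply: le_lt_trans pn _.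
rewrite -[X in _ < X](lnK (x:=eps)) ?posrE // ltr_expR.
by rewrite ltr_pdivrMr // in nb; rewrite mulNr mulrC; lra.
Qed.

End LogRate.

Section Posterior.
Context {R : realType} {dO dT : measure_display}
  {Omega : measurableType dO} {Theta : measurableType dT}.
Variables (pi : probability Theta R) (lr : nat -> Theta -> Omega -> R).
Variables (n : nat) (w : Omega).
Hypothesis mlr : measurable_fun setT (fun th => lr n th w).

Lemma postNum_ge0 A : (0 <= postNum pi lr n w A)%E.
Proof. by apply: integral_ge0 => th _; rewrite lee_fin expR_ge0. Qed.

Lemma post_ge0 A : 0 <= post pi lr n w A.
Proof. by rewrite /post divr_ge0 // fine_ge0 // postNum_ge0. Qed.

(* With vanishing evidence every posterior is [0], as [x / 0 = 0]. *)
Lemma post_evidence0 A : fine (postNum pi lr n w setT) = 0 -> post pi lr n w A = 0.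
Proof. by rewrite /post => ->; rewrite invr0 mulr0. Qed.

Lemma postDC A : measurable A -> fine (postNum pi lr n w setT) != 0 ->
  post pi lr n w A + post pi lr n w (~` A) = 1.
Proof.
move=> mA Z0.
have mf : measurable_fun (A `|` ~` A) (EFin \o (expR \o (fun th => lr n th w))).
  by rewrite setUv; apply/measurable_EFinP; exact: measurableT_comp (@measurable_expR R) mlr.
have E : postNum pi lr n w setT = (postNum pi lr n w A + postNum pi lr n w (~` A))%E.
  rewrite /postNum -(setUv A) ge0_integral_setU //; first exact: measurableC.
  by rewrite /disj_set setICr.
have : postNum pi lr n w setT \is a fin_num by move: Z0; case: postNum; rewrite ?eqxx.
rewrite /post E fin_numD in Z0 * => /andP[fa fb].
by rewrite fineD // in Z0 *; rewrite -mulrDl divff.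
Qed.

Lemma post_le1 A : measurable A -> post pi lr n w A <= 1.
Proof.
move=> mA; have [Z|Z] := eqVneq (fine (postNum pi lr n w setT)) 0.
  by rewrite post_evidence0.
by have := postDC mA Z; have := post_ge0 (~` A); lra.
Qed.

End Posterior.

Arguments post_ge0 {R dO dT Omega Theta pi lr n w A}.

Section FalseNondiscoveryRate.
Context {R : realType} {dO dT : measure_display}
  {Omega : measurableType dO} {Theta : measurableType dT}.
Variables (pi : probability Theta R) (lr : nat -> Theta -> Omega -> R).
Variables (m : nat) (Ups1 : 'I_m -> set Theta) (G : 'I_m -> {set 'I_m}).
Variables (rule : {ffun config m -> R} -> config m) (beta : R) (n : nat) (w : Omega).

Lemma FNR_ge0 : 0 <= FNR pi lr Ups1 G rule beta n w.
Proof.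
apply: sumr_ge0 => d _; apply: mulr_ge0; last by rewrite /deltaNM; case: (_ == _).
by apply: divr_ge0 => //; apply: sumr_ge0 => i _; rewrite mulr_ge0 ?post_ge0.
Qed.

Lemma FNR_le_accepted : FNR pi lr Ups1 G rule beta n w <=
  \sum_(i < m) (~~ dhat pi lr Ups1 G rule beta n w i)%:R * v_in pi lr Ups1 i n w.
Proof.
rewrite /FNR (bigD1 (dhat pi lr Ups1 G rule beta n w)) //= /deltaNM eqxx mulr1.
rewrite [X in _ + X]big1 ?addr0 => [|d /negbTE ->]; last by rewrite mulr0.
rewrite ler_pdivrMr ?ltr0n ?leq_maxr // ler_peMr ?ler1n ?leq_maxr //.
by apply: sumr_ge0 => i _; rewrite mulr_ge0 ?post_ge0.
Qed.

End FalseNondiscoveryRate.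

Section Selection.
Context {R : realType} {dO dT : measure_display}
  {Omega : measurableType dO} {Theta : measurableType dT}.
Variables (pi : probability Theta R) (lr : nat -> Theta -> Omega -> R).
Variables (m : nat) (Ups1 : 'I_m -> set Theta) (G : 'I_m -> {set 'I_m}).
Hypothesis mUps1 : forall i, measurable (Ups1 i).
Hypothesis G_refl : forall i, i \in G i.

Lemma measurable_Psi i d : measurable (Psi Ups1 G i d).
Proof.
apply: measurableI => //; apply: fin_bigcap_measurable; first exact: finite_finset.
by move=> k _; rewrite /Ups; case: (d k) => //; exact: measurableC.
Qed.

Variables (beta eps : R) (n : nat) (w : Omega) (dt : config m).
Hypothesis mlr : measurable_fun setT (fun th => lr n th w).
Hypotheses (beta_ge0 : 0 <= beta) (eps_ge0 : 0 <= eps).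

Lemma score_true_config_ge :
  (forall j, dt j -> post pi lr n w (~` Psi Ups1 G j dt) < eps) ->
  fine (postNum pi lr n w setT) != 0 ->
  (\sum_(i < m) (dt i)%:R) * (1 - eps - beta) <= score pi lr Ups1 G beta n w dt.
Proof.
move=> small_compl Z; rewrite /score mulr_suml; apply: ler_sum => i _.
case: (boolP (dt i)) => di /=; last by rewrite !mul0r.
have := postDC mlr (measurable_Psi i dt) Z; have := small_compl i di.
rewrite /w_in !mul1r; lra.
Qed.

Lemma score_le_of_missed_rejection (d : config m) j : dt j -> ~~ d j ->
  (forall i, ~ Dset G dt i d -> w_in pi lr Ups1 G i d n w < eps) ->
  score pi lr Ups1 G beta n w d <= \sum_(i < m) (dt i)%:R + m%:R * eps - 1.
Proof.
move=> dtj ndj small_wrong; have e0 := eps_ge0; have b0 := beta_ge0.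
have term i : (d i)%:R * (w_in pi lr Ups1 G i d n w - beta) <=
    (dt i)%:R + eps - ((i == j)%:R : R).
  have [->|ij] := eqVneq i j; first by rewrite (negbTE ndj) dtj mul0r; lra.
  have dt0 : 0 <= (dt i)%:R :> R by [].
  rewrite subr0; case: (boolP (d i)) => di /=; last by rewrite mul0r; lra.
  rewrite mul1r; case: (pselect (Dset G dt i d)) => D; last by have := small_wrong i D; lra.
  rewrite -(D i (G_refl i)) di.
  by have := post_le1 pi mlr (measurable_Psi i d); rewrite /w_in /=; lra.
apply: le_trans (ler_sum _ (fun i _ => term i)) _.
have sum_eqj : \sum_(i < m) ((i == j)%:R : R) = 1.
  by rewrite (bigD1 j) //= eqxx big1 ?addr0 // => i /negbTE ->.
by rewrite !big_split /= sumrN sum_eqj sumr_const card_ord mulr_natl.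
Qed.

Lemma dhat_rejects_true rule : argmax_rule rule ->
  m%:R * (2 * eps + beta) < 1 ->
  (forall i d, ~ Dset G dt i d -> w_in pi lr Ups1 G i d n w < eps) ->
  (forall j, dt j -> post pi lr n w (~` Psi Ups1 G j dt) < eps) ->
  fine (postNum pi lr n w setT) != 0 ->
  forall j, dt j -> dhat pi lr Ups1 G rule beta n w j.
Proof.
move=> argmax small_m small_wrong small_compl Z j dtj; apply/negPn/negP => ndj.
have le_score : score pi lr Ups1 G beta n w dt <=
    score pi lr Ups1 G beta n w (dhat pi lr Ups1 G rule beta n w).
  by have := argmax [ffun d => score pi lr Ups1 G beta n w d] dt; rewrite !ffunE.
have := score_true_config_ge small_compl Z.
have := score_le_of_missed_rejection dtj ndj (small_wrong^~ _).
have K_le_m : \sum_(i < m) ((dt i)%:R : R) <= m%:R.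
  by rewrite -[X in _ <= X%:R]card_ord -sumr_const; apply: ler_sum => i _; case: (dt i).
(* [K (1 - eps - beta) <= K + m eps - 1] with [K <= m] contradicts [m (2 eps + beta) < 1]. *)
have := eps_ge0; have := beta_ge0; nra.
Qed.

Lemma FNR_le_true_nulls rule : argmax_rule rule ->
  m%:R * (2 * eps + beta) < 1 ->
  (forall i d, ~ Dset G dt i d -> w_in pi lr Ups1 G i d n w < eps) ->
  (forall j, dt j -> post pi lr n w (~` Psi Ups1 G j dt) < eps) ->
  FNR pi lr Ups1 G rule beta n w <= \sum_(i < m) (~~ dt i)%:R * v_in pi lr Ups1 i n w.
Proof.
move=> argmax small_m small_wrong small_compl.
apply: le_trans (FNR_le_accepted pi lr Ups1 G rule beta n w) _; apply: ler_sum => i _.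
have [Z|Z] := eqVneq (fine (postNum pi lr n w setT)) 0.
  by rewrite /v_in post_evidence0 // !mulr0.
case: (boolP (dt i)) => dti; last by rewrite ler_wpM2r ?post_ge0 ?lern1 ?leq_b1.
by rewrite (dhat_rejects_true argmax small_m small_wrong small_compl Z dti) mul0r.
Qed.

End Selection.

Section Asymptotics.
Context {R : realType} {dO dT : measure_display}
  {Omega : measurableType dO} {Theta : measurableType dT}.
Variables (pi : probability Theta R) (lr : nat -> Theta -> Omega -> R).
Variables (m : nat) (Ups1 : 'I_m -> set Theta) (G : 'I_m -> {set 'I_m}).
Hypothesis mUps1 : forall i, measurable (Ups1 i).
Hypothesis G_refl : forall i, i \in G i.
Variables (w : Omega) (dt : config m).
Hypothesis mlr : forall n, measurable_fun setT (fun th => lr n th w).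

Lemma FNR_le_true_nulls_near rule (beta : nat -> R) : argmax_rule rule ->
  (forall n, 0 <= beta n) -> beta @ \oo --> 0 ->
  (forall i d, ~ Dset G dt i d -> (fun n => w_in pi lr Ups1 G i d n w) @ \oo --> 0) ->
  (forall j, dt j -> (fun n => post pi lr n w (~` Psi Ups1 G j dt)) @ \oo --> 0) ->
  \forall n \near \oo,
    FNR pi lr Ups1 G rule (beta n) n w <= \sum_(i < m) (~~ dt i)%:R * v_in pi lr Ups1 i n w.
Proof.
move=> argmax beta_ge0 beta_cvg0 wrong_cvg0 compl_cvg0.
(* Once [beta n < eps], this [eps] gives [m (2 eps + beta n) < 1]. *)
pose eps : R := (3 * m%:R + 1)^-1.
have eps_gt0 : 0 < eps by rewrite invr_gt0 ltr_wpDl ?mulr_ge0.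
have m_eps : m%:R * (3 * eps) < 1.
  by rewrite /eps mulrA ltr_pdivrMr ?ltr_wpDl ?mulr_ge0 // mul1r; lra.
have small_wrong : \forall n \near \oo, forall i d,
    ~ Dset G dt i d -> w_in pi lr Ups1 G i d n w < eps.
  apply: filter_forall => i; apply: filter_forall => d.
  case: (pselect (Dset G dt i d)) => D; first exact: nearW.
  by apply: filterS (cvgr_lt _ (wrong_cvg0 i d D) _ eps_gt0).
have small_compl : \forall n \near \oo, forall j,
    dt j -> post pi lr n w (~` Psi Ups1 G j dt) < eps.
  apply: filter_forall => j; case: (boolP (dt j)) => dtj; last exact: nearW.
  by apply: filterS (cvgr_lt _ (compl_cvg0 j dtj) _ eps_gt0).
near=> n.
apply: (FNR_le_true_nulls mUps1 G_refl (mlr n) (beta_ge0 n) (ltW eps_gt0) argmax).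
- have : beta n < eps by near: n; exact: cvgr_lt _ beta_cvg0 _ eps_gt0.
  by have := beta_ge0 n; nra.
- by near: n.
- by near: n.
Unshelve. all: by end_near.
Qed.

Lemma limn_esup_lograte_FNR_le rule (beta : nat -> R) (H : \bar R) :
  (0 < m)%N -> argmax_rule rule -> (forall n, 0 <= beta n) -> beta @ \oo --> 0 ->
  (forall i d, ~ Dset G dt i d -> (fun n => w_in pi lr Ups1 G i d n w) @ \oo --> 0) ->
  (forall j, dt j -> (fun n => post pi lr n w (~` Psi Ups1 G j dt)) @ \oo --> 0) ->
  (forall c : R, (c%:E < H)%E -> forall i, ~~ dt i ->
     \forall n \near \oo, v_in pi lr Ups1 i n w <= expR (- c * n%:R)) ->
  (limn_esup (lograte (fun n => FNR pi lr Ups1 G rule (beta n) n w)) <= - H)%E.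
Proof.
move=> m_gt0 argmax beta_ge0 beta_cvg0 wrong_cvg0 compl_cvg0 null_decay.
have FNR_le := FNR_le_true_nulls_near argmax beta_ge0 beta_cvg0 wrong_cvg0 compl_cvg0.
apply: lee_oppr_of_lt => c cH; have [c' cc' c'H] := EFin_lt_exists_between cH.
apply/limn_esup_le_near/(lograte_le_near (K := m%:R) _ cc' (fun n => FNR_ge0 _ _ _ _ _ _ n w)).
  by rewrite ltr0n.
apply: filterS2 FNR_le (sum_indicator_le_near (fun n => expR_ge0 _) (null_decay c' c'H)).
by move=> n; exact: le_trans.
Qed.

End Asymptotics.

Theorem theorem11
  (R : realType) (dO dT : measure_display)
  (Omega : measurableType dO) (Theta : measurableType dT)
  (P : probability Omega R) (pi : probability Theta R)
  (m : nat) (lr : nat -> Theta -> Omega -> R)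
  (Ups1 : 'I_m -> set Theta) (G : 'I_m -> {set 'I_m})
  (dt : config m) (S : {set 'I_m})
  (rule : {ffun config m -> R} -> config m)
  (beta : nat -> R) (alpha : R) :
  (1 < m)%N ->
  (forall i, i \in G i) ->
  (forall i, measurable (Ups1 i)) ->
  (forall n w, measurable_fun setT (fun th => lr n th w)) ->
  (forall th, cvgn (fun n => hseq P lr n th)) ->
  true_config P pi lr Ups1 dt ->
  standing P pi lr Ups1 G dt ->
  argmax_rule rule ->
  condG G dt S ->
  dt != config0 m -> dt != config1 m ->
  (forall n, 0 <= beta n < 1) ->
  beta @ \oo --> 0 ->
  (fun n => mpBFDR P pi lr Ups1 G rule (beta n) n) @ \oo --> alpha ->
  1 / ((\sum_(i < m) nat_of_bool (dt i))%:R + 1) < alpha ->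
  alpha < (m - #|S|)%:R / ((\sum_(i < m) nat_of_bool (dt i))%:R + (m - #|S|)%:R) ->
  let Hmin := \big[Order.min/+oo%E]_(i < m | ~~ dt i) JA P pi lr (Ups1 i) in
  {ae P, forall w,
     (limn_esup (fun n => (n%:R^-1)%:E * logE (FNR pi lr Ups1 G rule (beta n) n w))
       <= - Hmin)%E}.
Proof.
(* Beyond the standing assumption only beta_n -> 0 is used: the constraints on
   alpha, condition (G) and (A2) serve in the paper to make such beta_n exist. *)
move=> m_gt1 G_refl mUps1 mlr _ _ [conc_Psi [conc_Ups [pos_wrong [_ [pos_compl _]]]]].
move=> argmax _ _ _ beta01 beta_cvg0 _ _ _ Hmin.
pose post_lograte A w := lograte (fun n => post pi lr n w A) @ \oo --> (- JA P pi lr A)%E.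
have ae_Psi : \forall w \near almost_everywhere P, forall i d,
    post_lograte (Psi Ups1 G i d) w /\ post_lograte (~` Psi Ups1 G i d) w.
  apply: filter_forall => i; apply: filter_forall => d.
  by case: (conc_Psi i d) => [[_ cv] [_ cvC]]; exact: filterS2 cv cvC.
have ae_Ups : \forall w \near almost_everywhere P, forall i, post_lograte (Ups1 i) w.
  by apply: filter_forall => i; case: (conc_Ups i true).
apply: filterS2 ae_Psi ae_Ups => w cv_Psi cv_Ups.
apply: (limn_esup_lograte_FNR_le mUps1 G_refl (mlr^~ w) (ltn_trans (ltn0Sn 0) m_gt1) argmax
  (fun n => (andP (beta01 n)).1) beta_cvg0) => [i d D|j dtj|c cHmin i nti].
- exact: lograte_cvg0 (fun=> post_ge0) (cv_Psi i d).1 (pos_wrong i d D).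
- exact: lograte_cvg0 (fun=> post_ge0) (cv_Psi j dt).2 (pos_compl j dtj).
- apply: lograte_cvg_le_expR (fun=> post_ge0) (cv_Ups i) (lt_le_trans cHmin _).
  by apply/bigmin_leP; right; exists i.
Qed.
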